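(* Let $(M^n,g)$ be a Riemannian manifold with Levi-Civita connection $\nabla$. Suppose either (i) $M$ is nearly conformally symmetric, i.e. $$\nabla_aR_{bc} - \nabla_b R_{ac} = \frac{1}{2(n-1)}[g_{bc}\nabla_a R - g_{ac}\nabla_{b}R],$$ or (ii) $M$ carries a $(1,3)$-tensor field $K$ satisfying $\nabla_m K_{bce}{}^m = A\, \nabla_m R_{bce}{}^m + B\,(a_{be}\nabla_c \varphi- a_{ce}\nabla_b\varphi)$ (with nonzero constants $A,B$, a smooth function $\varphi$ and a symmetric Codazzi tensor $a_{bc}$) and such that $\nabla_m K_{bce}{}^m=0$ (in particular if $K=0$ or $\nabla_a K_{bcd}{}^e=0$). Then $$R_{am}R_{bce}{}^m + R_{bm}R_{cae}{}^m+ R_{cm}R_{abe}{}^m =0$$ and $$R_{am} R_{bec}{}^m - R_{bm}R_{ace}{}^m + R_{cm} R_{eba}{}^m -R_{em} R_{cab}{}^m =0 .$$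
   Context: Abstract index notation with Einstein summation. $R_{abc}{}^d = \partial_a \Gamma_{bc}^d - \partial_b\Gamma_{ac}^d - \Gamma_{ac}^k\Gamma_{bk}^d + \Gamma_{ak}^d \Gamma_{bc}^k$, Ricci tensor $R_{ac}=R_{abc}{}^b$, scalar curvature $R=g^{ac}R_{ac}$. A Codazzi tensor is a symmetric $(0,2)$ tensor with $\nabla_b a_{cd}=\nabla_c a_{bd}$. *)

From Stdlib Require Import Reals List ClassicalEpsilon.
Open Scope R_scope.

(** Points of the coordinate space: x : nat -> R; only the first n coordinates
    x 0, ..., x (n-1) are relevant (see [smooth]). *)
Definition Pt := nat -> R.

Fixpoint sumn (n : nat) (F : nat -> R) : R :=
  match n with O => 0 | S m => sumn m F + F m end.

Definition upd (x : Pt) (i : nat) (t : R) : Pt :=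
  fun j => if Nat.eqb j i then t else x j.

Definition has_pd (f : Pt -> R) (i : nat) (x : Pt) (l : R) : Prop :=
  derivable_pt_lim (fun t => f (upd x i t)) (x i) l.

(** The partial derivative (0 if it does not exist). *)
Definition pd (f : Pt -> R) (i : nat) (x : Pt) : R :=
  match excluded_middle_informative (exists l, has_pd f i x l) with
  | left H => proj1_sig (constructive_indefinite_description _ H)
  | right _ => 0
  end.

Fixpoint pds (l : list nat) (f : Pt -> R) : Pt -> R :=
  match l with
  | nil => f
  | i :: l' => fun x => pd (pds l' f) i x
  end.

Definition cont (n : nat) (h : Pt -> R) : Prop :=
  forall x eps, 0 < eps -> exists delta, 0 < delta /\
    forall y, (forall i, (i < n)%nat -> Rabs (y i - x i) < delta) ->
              (forall i, (n <= i)%nat -> y i = x i) ->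
              Rabs (h y - h x) < eps.

Definition smooth (n : nat) (f : Pt -> R) : Prop :=
  (forall x y, (forall i, (i < n)%nat -> x i = y i) -> f x = f y) /\
  (forall l, Forall (fun i => (i < n)%nat) l ->
     cont n (pds l f) /\
     forall i x, (i < n)%nat -> exists d, has_pd (pds l f) i x d).

(** Tensor fields in components: (0,2) tensors [T b c x],
    (1,3) tensors [T b c d e x] with e the upper index. *)
Definition tensor02 := nat -> nat -> Pt -> R.
Definition tensor13 := nat -> nat -> nat -> nat -> Pt -> R.

Definition riemannian (n : nat) (g gi : tensor02) : Prop :=
  (forall i j, (i < n)%nat -> (j < n)%nat -> smooth n (g i j)) /\
  (forall i j, (i < n)%nat -> (j < n)%nat -> smooth n (gi i j)) /\
  (forall i j x, (i < n)%nat -> (j < n)%nat -> g i j x = g j i x) /\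
  (forall x (v : nat -> R), (exists i, (i < n)%nat /\ v i <> 0) ->
      0 < sumn n (fun i => sumn n (fun j => g i j x * v i * v j))) /\
  (forall i k x, (i < n)%nat -> (k < n)%nat ->
      sumn n (fun j => g i j x * gi j k x) = if Nat.eqb i k then 1 else 0).

Section Geometry.
Variables (n : nat) (g gi : tensor02).

Definition Gamma (b c d : nat) (x : Pt) : R :=
  / 2 * sumn n (fun k => gi d k x *
     (pd (g k c) b x + pd (g k b) c x - pd (g b c) k x)).

Definition Riem (a b c d : nat) (x : Pt) : R :=
  pd (Gamma b c d) a x - pd (Gamma a c d) b x
  - sumn n (fun k => Gamma a c k x * Gamma b k d x)
  + sumn n (fun k => Gamma a k d x * Gamma b c k x).

Definition Ric (a c : nat) (x : Pt) : R := sumn n (fun b => Riem a b c b x).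

Definition Scal (x : Pt) : R :=
  sumn n (fun a => sumn n (fun c => gi a c x * Ric a c x)).

Definition cov02 (T : tensor02) (a b c : nat) (x : Pt) : R :=
  pd (T b c) a x
  - sumn n (fun k => Gamma a b k x * T k c x)
  - sumn n (fun k => Gamma a c k x * T b k x).

Definition cov13 (T : tensor13) (a b c d e : nat) (x : Pt) : R :=
  pd (T b c d e) a x
  - sumn n (fun k => Gamma a b k x * T k c d e x)
  - sumn n (fun k => Gamma a c k x * T b k d e x)
  - sumn n (fun k => Gamma a d k x * T b c k e x)
  + sumn n (fun k => Gamma a k e x * T b c d k x).

Definition div13 (T : tensor13) (b c e : nat) (x : Pt) : R :=
  sumn n (fun m => cov13 T m b c e m x).

Definition nearly_conf_symmetric : Prop :=
  forall a b c x, (a < n)%nat -> (b < n)%nat -> (c < n)%nat ->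
    cov02 Ric a b c x - cov02 Ric b a c x =
    / (2 * (INR n - 1)) * (g b c x * pd Scal a x - g a c x * pd Scal b x).

Definition sym_codazzi (t : tensor02) : Prop :=
  (forall i j, (i < n)%nat -> (j < n)%nat -> smooth n (t i j)) /\
  (forall i j x, (i < n)%nat -> (j < n)%nat -> t i j x = t j i x) /\
  (forall b c d x, (b < n)%nat -> (c < n)%nat -> (d < n)%nat ->
     cov02 t b c d x = cov02 t c b d x).

Definition condition_ii : Prop :=
  exists (K : tensor13) (A B : R) (phi : Pt -> R) (t : tensor02),
    A <> 0 /\ B <> 0 /\ smooth n phi /\ sym_codazzi t /\
    (forall b c d e, (b < n)%nat -> (c < n)%nat -> (d < n)%nat -> (e < n)%nat ->
       smooth n (K b c d e)) /\
    (forall b c e x, (b < n)%nat -> (c < n)%nat -> (e < n)%nat ->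
       div13 K b c e x = A * div13 Riem b c e x
                         + B * (t b e x * pd phi c x - t c e x * pd phi b x)) /\
    (forall b c e x, (b < n)%nat -> (c < n)%nat -> (e < n)%nat ->
       div13 K b c e x = 0).

End Geometry.

From Stdlib Require Import Reals List ClassicalEpsilon Lra Lia FunctionalExtensionality.
Open Scope R_scope.

(* Put D_{bce} = ∇_b R_{ce} - ∇_c R_{be}. The Ricci identity for the symmetric tensor
   R_{ce}, together with the first Bianchi identity, shows that the cyclic sum over (a,b,c)
   of ∇_a D_{bce} is minus the left-hand side of the first identity. Under (i), and under
   (ii) through the contracted second Bianchi identity ∇_m R_{bce}{}^m = -D_{bce}, the
   tensor D has the form k (u_{ce} ∂_b f - u_{be} ∂_c f) with u a Codazzi tensor
   (u = g, f = R for (i); u = a, f = φ for (ii)), and the cyclic sum of its covariant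
   derivative vanishes because ∇_a u_{be} and the Hessian of f are symmetric in (a,b). The second
   identity follows from the first by the first Bianchi identity.
   All tensor identities are checked at a point, on the values of Γ and of its first two
   partial derivatives, where they become identities between finite sums. *)

Lemma sumn_ext m F G : (forall k, (k < m)%nat -> F k = G k) -> sumn m F = sumn m G.
Proof.
  induction m as [|m IH]; intros H; simpl; auto.
  rewrite IH by (intros; apply H; lia); rewrite H by lia; reflexivity.
Qed.

Lemma sumn_plus m F G : sumn m (fun k => F k + G k) = sumn m F + sumn m G.
Proof. induction m as [|m IH]; simpl; [ring | rewrite IH; ring]. Qed.

Lemma sumn_minus m F G : sumn m (fun k => F k - G k) = sumn m F - sumn m G.
Proof. induction m as [|m IH]; simpl; [ring | rewrite IH; ring]. Qed.

Lemma sumn_opp m F : sumn m (fun k => - F k) = - sumn m F.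
Proof. induction m as [|m IH]; simpl; [ring | rewrite IH; ring]. Qed.

Lemma sumn_scal_l m c F : sumn m (fun k => c * F k) = c * sumn m F.
Proof. induction m as [|m IH]; simpl; [ring | rewrite IH; ring]. Qed.

Lemma sumn_scal_r m c F : sumn m (fun k => F k * c) = sumn m F * c.
Proof. induction m as [|m IH]; simpl; [ring | rewrite IH; ring]. Qed.

Lemma sumn_zero m F : (forall k, (k < m)%nat -> F k = 0) -> sumn m F = 0.
Proof.
  intros H; rewrite (sumn_ext m F (fun _ => 0)) by auto; clear.
  induction m as [|m IH]; simpl; [ring | rewrite IH; ring].
Qed.

Lemma sumn_swap m p F :
  sumn m (fun k => sumn p (fun l => F k l)) = sumn p (fun l => sumn m (fun k => F k l)).
Proof.
  induction m as [|m IH]; simpl.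
  - symmetry; apply sumn_zero; auto.
  - rewrite IH, <- sumn_plus; reflexivity.
Qed.

Lemma sumn_antisym_zero m F :
  (forall k l, (k < m)%nat -> (l < m)%nat -> F k l = - F l k) ->
  sumn m (fun k => sumn m (fun l => F k l)) = 0.
Proof.
  intros H.
  enough (E : sumn m (fun k => sumn m (fun l => F k l))
              = - sumn m (fun k => sumn m (fun l => F k l))) by lra.
  rewrite sumn_swap at 1; rewrite <- sumn_opp.
  apply sumn_ext; intros l Hl; rewrite <- sumn_opp.
  apply sumn_ext; intros k Hk; auto.
Qed.

Lemma sumn_kronecker m c X :
  (c < m)%nat -> sumn m (fun l => X l * (if Nat.eqb c l then 1 else 0)) = X c.
Proof.
  induction m as [|m IH]; intros Hc; simpl; [lia |].
  destruct (Nat.eq_dec c m) as [-> | Hne].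
  - rewrite Nat.eqb_refl, sumn_zero; [ring |].
    intros k Hk; destruct (Nat.eqb_spec m k); [lia | ring].
  - rewrite IH by lia; destruct (Nat.eqb_spec c m); [lia | ring].
Qed.

Lemma upd_same x i t : upd x i t i = t.
Proof. unfold upd; rewrite Nat.eqb_refl; reflexivity. Qed.

Lemma upd_upd_same x i s t : upd (upd x i s) i t = upd x i t.
Proof. apply functional_extensionality; intros j; unfold upd; destruct (Nat.eqb j i); auto. Qed.

Lemma upd_id x i : upd x i (x i) = x.
Proof.
  apply functional_extensionality; intros j; unfold upd.
  destruct (Nat.eqb_spec j i); subst; auto.
Qed.

Lemma upd_comm x i j s t : i <> j -> upd (upd x i s) j t = upd (upd x j t) i s.
Proof.
  intros H; apply functional_extensionality; intros k; unfold upd.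
  destruct (Nat.eqb_spec k j), (Nat.eqb_spec k i); subst; auto; lia.
Qed.

Lemma pd_unique f i x l : has_pd f i x l -> pd f i x = l.
Proof.
  intros H; unfold pd; destruct (excluded_middle_informative _) as [E | NE].
  - destruct (constructive_indefinite_description _ E) as [l' Hl']; simpl.
    eapply uniqueness_limite; eauto.
  - exfalso; eauto.
Qed.

Lemma has_pd_pd f i x : (exists l, has_pd f i x l) -> has_pd f i x (pd f i x).
Proof. intros [l H]; rewrite (pd_unique _ _ _ _ H); exact H. Qed.

Lemma has_pd_const c i x : has_pd (fun _ => c) i x 0.
Proof. exact (derivable_pt_lim_const c (x i)). Qed.

Lemma has_pd_plus f g i x l1 l2 :
  has_pd f i x l1 -> has_pd g i x l2 -> has_pd (fun y => f y + g y) i x (l1 + l2).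
Proof. exact (derivable_pt_lim_plus _ _ _ _ _). Qed.

Lemma has_pd_minus f g i x l1 l2 :
  has_pd f i x l1 -> has_pd g i x l2 -> has_pd (fun y => f y - g y) i x (l1 - l2).
Proof. exact (derivable_pt_lim_minus _ _ _ _ _). Qed.

Lemma has_pd_scal c f i x l : has_pd f i x l -> has_pd (fun y => c * f y) i x (c * l).
Proof. exact (derivable_pt_lim_scal _ c _ _). Qed.

Lemma has_pd_mult f g i x l1 l2 :
  has_pd f i x l1 -> has_pd g i x l2 -> has_pd (fun y => f y * g y) i x (l1 * g x + f x * l2).
Proof.
  intros H1 H2; pose proof (derivable_pt_lim_mult _ _ _ _ _ H1 H2) as H.
  unfold has_pd; cbv beta in H; rewrite upd_id in H; exact H.
Qed.

Lemma has_pd_sumn m F L i x :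
  (forall k, (k < m)%nat -> has_pd (F k) i x (L k)) ->
  has_pd (fun y => sumn m (fun k => F k y)) i x (sumn m L).
Proof.
  induction m as [|m IH]; intros H; simpl.
  - apply has_pd_const.
  - apply has_pd_plus; [apply IH; intros |]; apply H; lia.
Qed.

Lemma has_pd_line f i x s l :
  has_pd f i (upd x i s) l -> derivable_pt_lim (fun s => f (upd x i s)) s l.
Proof.
  unfold has_pd; rewrite upd_same.
  replace (fun t => f (upd (upd x i s) i t)) with (fun t => f (upd x i t)); auto.
  apply functional_extensionality; intros; rewrite upd_upd_same; auto.
Qed.

Section Smooth.
Variable n : nat.

Lemma smooth_has_pd f i x : smooth n f -> (i < n)%nat -> has_pd f i x (pd f i x).
Proof.
  intros [_ H] Hi; apply has_pd_pd.
  exact (proj2 (H nil (Forall_nil _)) i x Hi).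
Qed.

Lemma smooth_cont f : smooth n f -> cont n f.
Proof. intros [_ H]; exact (proj1 (H nil (Forall_nil _))). Qed.

Lemma pds_app l l' f : pds l (pds l' f) = pds (l ++ l') f.
Proof. induction l as [|i l IH]; simpl; [| rewrite IH]; reflexivity. Qed.

Lemma pd_local f i x y :
  (i < n)%nat -> (forall x y, (forall k, (k < n)%nat -> x k = y k) -> f x = f y) ->
  (forall k, (k < n)%nat -> x k = y k) -> pd f i x = pd f i y.
Proof.
  intros Hi Hf Hxy; unfold pd, has_pd.
  replace (fun t => f (upd x i t)) with (fun t => f (upd y i t)).
  - rewrite (Hxy i Hi); reflexivity.
  - apply functional_extensionality; intros t; apply Hf; intros k Hk; unfold upd.
    destruct (Nat.eqb k i); auto; symmetry; auto.
Qed.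

Lemma smooth_pd f i : smooth n f -> (i < n)%nat -> smooth n (pd f i).
Proof.
  intros [Hloc Hder] Hi; split.
  - intros x y Hxy; apply pd_local; auto.
  - intros l Hl; change (pd f i) with (pds (i :: nil) f); rewrite pds_app.
    apply Hder, Forall_app; auto.
Qed.

Lemma smooth_const c : smooth n (fun _ => c).
Proof.
  split; auto; intros l _.
  assert (E : exists c', pds l (fun _ => c) = fun _ => c').
  { induction l as [|i l [c' E]]; simpl; [exists c; auto |].
    rewrite E; exists 0; apply functional_extensionality; intros x.
    apply pd_unique, has_pd_const. }
  destruct E as [c' ->]; split.
  - intros x eps He; exists 1; split; [lra |].
    intros; rewrite Rminus_diag, Rabs_R0; auto.
  - intros i x _; exists 0; apply has_pd_const.
Qed.

Lemma cont_plus f g : cont n f -> cont n g -> cont n (fun x => f x + g x).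
Proof.
  intros Hf Hg x eps He.
  destruct (Hf x (eps / 2)) as [d1 [Hd1 H1]]; [lra |].
  destruct (Hg x (eps / 2)) as [d2 [Hd2 H2]]; [lra |].
  exists (Rmin d1 d2); split; [apply Rmin_pos; auto |].
  intros y Hy Hy'.
  pose proof (H1 y (fun i Hi => Rlt_le_trans _ _ _ (Hy i Hi) (Rmin_l _ _)) Hy').
  pose proof (H2 y (fun i Hi => Rlt_le_trans _ _ _ (Hy i Hi) (Rmin_r _ _)) Hy').
  replace (f y + g y - (f x + g x)) with ((f y - f x) + (g y - g x)) by ring.
  eapply Rle_lt_trans; [apply Rabs_triang | lra].
Qed.

Lemma cont_mult f g : cont n f -> cont n g -> cont n (fun x => f x * g x).
Proof.
  intros Hf Hg x eps He.
  set (K := 1 + Rabs (f x) + Rabs (g x)).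
  assert (HK : 1 <= K) by (unfold K; pose proof (Rabs_pos (f x)); pose proof (Rabs_pos (g x)); lra).
  set (e := Rmin 1 (eps / (2 * K))).
  assert (He1 : 0 < e) by (apply Rmin_pos; [lra | apply Rdiv_lt_0_compat; lra]).
  assert (He2 : e <= 1) by apply Rmin_l.
  assert (He3 : e * K <= eps / 2).
  { assert (e <= eps / (2 * K)) as H by apply Rmin_r.
    apply Rmult_le_compat_r with (r := K) in H; [| lra].
    replace (eps / (2 * K) * K) with (eps / 2) in H by (field; lra); exact H. }
  destruct (Hf x e He1) as [d1 [Hd1 H1]].
  destruct (Hg x e He1) as [d2 [Hd2 H2]].
  exists (Rmin d1 d2); split; [apply Rmin_pos; auto |].
  intros y Hy Hy'.
  pose proof (H1 y (fun i Hi => Rlt_le_trans _ _ _ (Hy i Hi) (Rmin_l _ _)) Hy').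
  pose proof (H2 y (fun i Hi => Rlt_le_trans _ _ _ (Hy i Hi) (Rmin_r _ _)) Hy').
  replace (f y * g y - f x * g x)
    with ((f y - f x) * (g y - g x) + f x * (g y - g x) + g x * (f y - f x)) by ring.
  eapply Rle_lt_trans; [apply Rabs_triang |].
  eapply Rle_lt_trans; [apply Rplus_le_compat_r, Rabs_triang |].
  rewrite !Rabs_mult.
  pose proof (Rabs_pos (f y - f x)); pose proof (Rabs_pos (g y - g x)).
  pose proof (Rabs_pos (f x)); pose proof (Rabs_pos (g x)).
  assert (Rabs (f y - f x) * Rabs (g y - g x) <= e * e) by (apply Rmult_le_compat; lra).
  assert (Rabs (f x) * Rabs (g y - g x) <= Rabs (f x) * e) by (apply Rmult_le_compat_l; lra).
  assert (Rabs (g x) * Rabs (f y - f x) <= Rabs (g x) * e) by (apply Rmult_le_compat_l; lra).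
  assert (e * e <= e * 1) by (apply Rmult_le_compat_l; lra).
  unfold K in He3; nra.
Qed.

(* Smoothness of a product is proved for the larger class of sums of products,
   which, unlike products, is closed under partial derivatives. *)
Inductive sum_of_products : (Pt -> R) -> Prop :=
| sop_mult f g : smooth n f -> smooth n g -> sum_of_products (fun x => f x * g x)
| sop_plus h1 h2 : sum_of_products h1 -> sum_of_products h2 ->
                   sum_of_products (fun x => h1 x + h2 x).

Lemma sum_of_products_cont h : sum_of_products h -> cont n h.
Proof.
  induction 1.
  - apply cont_mult; apply smooth_cont; auto.
  - apply cont_plus; auto.
Qed.

Lemma sum_of_products_local h : sum_of_products h ->
  forall x y, (forall k, (k < n)%nat -> x k = y k) -> h x = h y.
Proof.
  induction 1 as [f g [Hf _] [Hg _] | h1 h2 _ IH1 _ IH2]; intros x y Hxy.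
  - rewrite (Hf x y), (Hg x y); auto.
  - rewrite (IH1 x y), (IH2 x y); auto.
Qed.

Lemma sum_of_products_pd h : sum_of_products h -> forall i, (i < n)%nat ->
  (forall x, has_pd h i x (pd h i x)) /\ sum_of_products (pd h i).
Proof.
  induction 1 as [f g Hf Hg | h1 h2 _ IH1 _ IH2]; intros i Hi.
  - assert (E : forall x, has_pd (fun x => f x * g x) i x (pd f i x * g x + f x * pd g i x))
      by (intros x; apply has_pd_mult; apply smooth_has_pd; auto).
    replace (pd (fun x => f x * g x) i) with (fun x => pd f i x * g x + f x * pd g i x).
    + split; [exact E |].
      apply sop_plus; apply sop_mult; auto; apply smooth_pd; auto.
    + apply functional_extensionality; intros x; symmetry; apply pd_unique, E.
  - destruct (IH1 i Hi) as [D1 S1], (IH2 i Hi) as [D2 S2].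
    assert (E : forall x, has_pd (fun x => h1 x + h2 x) i x (pd h1 i x + pd h2 i x))
      by (intros x; apply has_pd_plus; auto).
    replace (pd (fun x => h1 x + h2 x) i) with (fun x => pd h1 i x + pd h2 i x).
    + split; [exact E | apply sop_plus; auto].
    + apply functional_extensionality; intros x; symmetry; apply pd_unique, E.
Qed.

Lemma sum_of_products_smooth h : sum_of_products h -> smooth n h.
Proof.
  intros Hh; split; [apply sum_of_products_local; auto |].
  intros l Hl.
  assert (Hpds : sum_of_products (pds l h)).
  { induction l as [|i l IH]; simpl; auto; inversion Hl; subst.
    exact (proj2 (sum_of_products_pd _ (IH ltac:(assumption)) i ltac:(assumption))). }
  split; [apply sum_of_products_cont; auto |].
  intros i x Hi; exists (pd (pds l h) i x); apply (sum_of_products_pd _ Hpds i Hi).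
Qed.

Lemma smooth_mult f g : smooth n f -> smooth n g -> smooth n (fun x => f x * g x).
Proof. intros; apply sum_of_products_smooth; constructor; auto. Qed.

Lemma smooth_plus f g : smooth n f -> smooth n g -> smooth n (fun x => f x + g x).
Proof.
  intros Hf Hg.
  replace (fun x => f x + g x) with (fun x => f x * (fun _ => 1) x + g x * (fun _ => 1) x)
    by (apply functional_extensionality; intros; ring).
  apply sum_of_products_smooth; apply sop_plus; apply sop_mult; auto; apply smooth_const.
Qed.

Lemma smooth_scal c f : smooth n f -> smooth n (fun x => c * f x).
Proof. intros; apply (smooth_mult (fun _ => c)); auto; apply smooth_const. Qed.

Lemma smooth_minus f g : smooth n f -> smooth n g -> smooth n (fun x => f x - g x).
Proof.
  intros Hf Hg.
  replace (fun x => f x - g x) with (fun x => f x + (fun x => -1 * g x) x)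
    by (apply functional_extensionality; intros; ring).
  apply smooth_plus, smooth_scal; auto.
Qed.

Lemma smooth_sumn m F :
  (forall k, (k < m)%nat -> smooth n (F k)) -> smooth n (fun x => sumn m (fun k => F k x)).
Proof.
  induction m as [|m IH]; intros H; simpl; [apply smooth_const |].
  apply (smooth_plus (fun x => sumn m (fun k => F k x))); [apply IH; intros |]; apply H; lia.
Qed.

(** * Symmetry of second partial derivatives *)

(* Two applications of the mean value theorem to the mixed second difference. *)
Lemma mixed_difference_mvt f i j x h : i <> j -> 0 < h ->
  (forall y, has_pd f i y (pd f i y)) ->
  (forall y, has_pd (pd f i) j y (pd (pd f i) j y)) ->
  exists s t, x i < s < x i + h /\ x j < t < x j + h /\
    f (upd (upd x i (x i + h)) j (x j + h)) - f (upd (upd x i (x i + h)) j (x j))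
    - f (upd (upd x i (x i)) j (x j + h)) + f (upd (upd x i (x i)) j (x j))
    = pd (pd f i) j (upd (upd x i s) j t) * h * h.
Proof.
  intros Hij Hh Hfi Hfij.
  set (phi := fun s => f (upd (upd x i s) j (x j + h)) - f (upd (upd x i s) j (x j))).
  set (phi' := fun s => pd f i (upd (upd x i s) j (x j + h)) - pd f i (upd (upd x i s) j (x j))).
  assert (Dphi : forall s, derivable_pt_lim phi s (phi' s)).
  { intros s; unfold phi, phi'.
    assert (E : forall u, (fun s => f (upd (upd x i s) j u)) = (fun s => f (upd (upd x j u) i s)))
      by (intros u; apply functional_extensionality; intros; rewrite upd_comm; auto).
    apply derivable_pt_lim_minus; rewrite E; apply has_pd_line;
      rewrite <- upd_comm by auto; apply Hfi. }
  destruct (MVT_cor2 phi phi' (x i) (x i + h)) as [s [Es Hs]]; [lra | intros; apply Dphi |].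
  set (psi := fun t => pd f i (upd (upd x i s) j t)).
  destruct (MVT_cor2 psi (fun t => pd (pd f i) j (upd (upd x i s) j t)) (x j) (x j + h))
    as [t [Et Ht]]; [lra | intros; apply has_pd_line, Hfij |].
  exists s, t; split; [exact Hs | split; [exact Ht |]].
  unfold phi, phi', psi in *.
  replace (x i + h - x i) with h in Es by ring.
  replace (x j + h - x j) with h in Et by ring.
  rewrite Et in Es; lra.
Qed.

Lemma pd_comm f i j x : smooth n f -> (i < n)%nat -> (j < n)%nat ->
  pd (pd f i) j x = pd (pd f j) i x.
Proof.
  intros Hf Hi Hj; destruct (Nat.eq_dec i j) as [-> | Hij]; auto.
  assert (Hfi : forall y, has_pd f i y (pd f i y)) by (intros; apply smooth_has_pd; auto).
  assert (Hfj : forall y, has_pd f j y (pd f j y)) by (intros; apply smooth_has_pd; auto).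
  assert (Hfij : forall y, has_pd (pd f i) j y (pd (pd f i) j y))
    by (intros; apply smooth_has_pd; [apply smooth_pd |]; auto).
  assert (Hfji : forall y, has_pd (pd f j) i y (pd (pd f j) i y))
    by (intros; apply smooth_has_pd; [apply smooth_pd |]; auto).
  assert (Cij : cont n (pd (pd f i) j)) by (apply smooth_cont, smooth_pd; [apply smooth_pd |]; auto).
  assert (Cji : cont n (pd (pd f j) i)) by (apply smooth_cont, smooth_pd; [apply smooth_pd |]; auto).
  set (A := pd (pd f i) j x); set (B := pd (pd f j) i x).
  destruct (Req_dec A B) as [E | Hne]; auto; exfalso.
  set (eps := Rabs (A - B) / 3).
  assert (Heps : 0 < eps) by (apply Rdiv_lt_0_compat; [apply Rabs_pos_lt |]; lra).
  destruct (Cij x eps Heps) as [d1 [Hd1 H1]].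
  destruct (Cji x eps Heps) as [d2 [Hd2 H2]].
  set (h := Rmin d1 d2 / 2).
  pose proof (Rmin_l d1 d2); pose proof (Rmin_r d1 d2); pose proof (Rmin_pos d1 d2 Hd1 Hd2).
  assert (Hh : 0 < h) by (unfold h; lra).
  destruct (mixed_difference_mvt f i j x h Hij Hh Hfi Hfij) as [s [t [Hs [Ht E1]]]].
  destruct (mixed_difference_mvt f j i x h (not_eq_sym Hij) Hh Hfj Hfji)
    as [s' [t' [Hs' [Ht' E2]]]].
  rewrite !(upd_comm x j i) in E2 by auto.
  set (y := upd (upd x i s) j t); set (y' := upd (upd x i t') j s').
  assert (Eq : pd (pd f i) j y = pd (pd f j) i y').
  { apply (Rmult_eq_reg_r (h * h)); [| nra]; rewrite <- !Rmult_assoc; unfold y, y'; lra. }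
  assert (Near : forall u v, x i < u < x i + h -> x j < v < x j + h ->
            forall k, (k < n)%nat -> Rabs (upd (upd x i u) j v k - x k) < Rmin d1 d2).
  { intros u v Hu Hv k Hk; unfold upd.
    destruct (Nat.eqb_spec k j); [subst; rewrite Rabs_right; unfold h in *; lra |].
    destruct (Nat.eqb_spec k i); [subst; rewrite Rabs_right; unfold h in *; lra |].
    rewrite Rminus_diag, Rabs_R0; lra. }
  assert (Fixed : forall u v k, (n <= k)%nat -> upd (upd x i u) j v k = x k).
  { intros u v k Hk; unfold upd.
    destruct (Nat.eqb_spec k j); [lia |]; destruct (Nat.eqb_spec k i); [lia | auto]. }
  assert (C1 : Rabs (pd (pd f i) j y - A) < eps)
    by (apply H1; [intros k Hk; unfold y; specialize (Near s t Hs Ht k Hk); lra | apply Fixed]).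
  assert (C2 : Rabs (pd (pd f j) i y' - B) < eps)
    by (apply H2; [intros k Hk; unfold y'; specialize (Near t' s' Ht' Hs' k Hk); lra | apply Fixed]).
  rewrite Eq in C1.
  assert (Rabs (A - B) <= Rabs (pd (pd f j) i y' - A) + Rabs (pd (pd f j) i y' - B)).
  { replace (A - B) with (- (pd (pd f j) i y' - A) + (pd (pd f j) i y' - B)) by ring.
    eapply Rle_trans; [apply Rabs_triang | rewrite Rabs_Ropp; lra]. }
  unfold eps in *; lra.
Qed.

End Smooth.

(** * Curvature identities on the 2-jet of a torsion-free connection *)

Section ConnectionJet.
Variable n : nat.
(* [G b c d], [dG z b c d] and [ddG y z b c d] are the values at one point of
   Γ_{bc}^d, ∂_z Γ_{bc}^d and ∂_y ∂_z Γ_{bc}^d; throughout, a suffix [_d] marks the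
   partial derivative of a quantity, the direction being its first argument. *)
Variables (G : nat -> nat -> nat -> R) (dG : nat -> nat -> nat -> nat -> R)
          (ddG : nat -> nat -> nat -> nat -> nat -> R).

Definition riem a b c d :=
  dG a b c d - dG b a c d - sumn n (fun k => G a c k * G b k d)
  + sumn n (fun k => G a k d * G b c k).

Definition riem_d z a b c d :=
  ddG z a b c d - ddG z b a c d
  - sumn n (fun k => dG z a c k * G b k d + G a c k * dG z b k d)
  + sumn n (fun k => dG z a k d * G b c k + G a k d * dG z b c k).

Definition ric c e := sumn n (fun m => riem c m e m).
Definition ric_d a c e := sumn n (fun m => riem_d a c m e m).

(* Covariant derivatives computed from the value [T] of a tensor and its
   partial derivatives [dT] at the point. *)
Definition jcov02 (T : nat -> nat -> R) (dT : nat -> nat -> nat -> R) a b c :=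
  dT a b c - sumn n (fun k => G a b k * T k c) - sumn n (fun k => G a c k * T b k).

Definition jcov03 (T : nat -> nat -> nat -> R) (dT : nat -> nat -> nat -> nat -> R) a b c e :=
  dT a b c e - sumn n (fun k => G a b k * T k c e) - sumn n (fun k => G a c k * T b k e)
  - sumn n (fun k => G a e k * T b c k).

Definition jcov13 (T : nat -> nat -> nat -> nat -> R)
    (dT : nat -> nat -> nat -> nat -> nat -> R) a b c d e :=
  dT a b c d e - sumn n (fun k => G a b k * T k c d e) - sumn n (fun k => G a c k * T b k d e)
  - sumn n (fun k => G a d k * T b c k e) + sumn n (fun k => G a k e * T b c d k).

Lemma jcov03_ext (T1 T2 : nat -> nat -> nat -> R) (dT1 dT2 : nat -> nat -> nat -> nat -> R)
    a b c e :
  (forall p q r, (p < n)%nat -> (q < n)%nat -> (r < n)%nat -> T1 p q r = T2 p q r) ->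
  dT1 a b c e = dT2 a b c e -> (b < n)%nat -> (c < n)%nat -> (e < n)%nat ->
  jcov03 T1 dT1 a b c e = jcov03 T2 dT2 a b c e.
Proof.
  intros HT HdT Hb Hc He; unfold jcov03; rewrite HdT.
  rewrite (sumn_ext n (fun k => G a b k * T1 k c e) (fun k => G a b k * T2 k c e)),
    (sumn_ext n (fun k => G a c k * T1 b k e) (fun k => G a c k * T2 b k e)),
    (sumn_ext n (fun k => G a e k * T1 b c k) (fun k => G a e k * T2 b c k))
    by (intros; rewrite HT; auto).
  reflexivity.
Qed.

Lemma riem_antisym a b c d : riem a b c d = - riem b a c d.
Proof.
  unfold riem.
  rewrite (sumn_ext _ (fun k => G b c k * G a k d) (fun k => G a k d * G b c k)),
    (sumn_ext _ (fun k => G b k d * G a c k) (fun k => G a c k * G b k d)) by (intros; ring).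
  ring.
Qed.

Lemma riem_d_antisym z a b c d : riem_d z a b c d = - riem_d z b a c d.
Proof.
  unfold riem_d.
  rewrite (sumn_ext _ (fun k => dG z b c k * G a k d + G b c k * dG z a k d)
             (fun k => dG z a k d * G b c k + G a k d * dG z b c k)),
    (sumn_ext _ (fun k => dG z b k d * G a c k + G b k d * dG z a c k)
       (fun k => dG z a c k * G b k d + G a c k * dG z b k d)) by (intros; ring).
  ring.
Qed.

Lemma jcov13_riem_antisym a b c d e :
  jcov13 riem riem_d a c b d e = - jcov13 riem riem_d a b c d e.
Proof.
  unfold jcov13.
  rewrite (sumn_ext _ (fun k => G a c k * riem k b d e) (fun k => - (G a c k * riem b k d e))),
    (sumn_ext _ (fun k => G a b k * riem c k d e) (fun k => - (G a b k * riem k c d e))),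
    (sumn_ext _ (fun k => G a d k * riem c b k e) (fun k => - (G a d k * riem b c k e))),
    (sumn_ext _ (fun k => G a k e * riem c b d k) (fun k => - (G a k e * riem b c d k)))
    by (intros; rewrite riem_antisym; ring).
  rewrite !sumn_opp, (riem_d_antisym a c b); ring.
Qed.

Lemma jcov13_trace T dT a c e :
  sumn n (fun m => jcov13 T dT a c m e m)
  = jcov02 (fun c e => sumn n (fun m => T c m e m))
           (fun a c e => sumn n (fun m => dT a c m e m)) a c e.
Proof.
  unfold jcov13, jcov02; rewrite sumn_plus, !sumn_minus.
  rewrite (sumn_swap n n (fun m k => G a c k * T k m e m)),
    (sumn_swap n n (fun m k => G a e k * T c m k m)),
    (sumn_swap n n (fun m k => G a k m * T c m e k)).
  rewrite (sumn_ext n (fun k => sumn n (fun m => G a c k * T k m e m))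
             (fun k => G a c k * sumn n (fun m => T k m e m))),
    (sumn_ext n (fun k => sumn n (fun m => G a e k * T c m k m))
       (fun k => G a e k * sumn n (fun m => T c m k m))) by (intros; apply sumn_scal_l).
  ring.
Qed.

Hypothesis G_sym : forall a b k, (a < n)%nat -> (b < n)%nat -> G a b k = G b a k.
Hypothesis dG_sym : forall z b c d, (b < n)%nat -> (c < n)%nat -> dG z b c d = dG z c b d.
Hypothesis ddG_comm : forall z a b c d,
  (z < n)%nat -> (a < n)%nat -> (b < n)%nat -> (c < n)%nat -> (d < n)%nat ->
  ddG z a b c d = ddG a z b c d.

Lemma riem_bianchi1 a b c d : (a < n)%nat -> (b < n)%nat -> (c < n)%nat ->
  riem a b c d + riem b c a d + riem c a b d = 0.
Proof.
  intros Ha Hb Hc; unfold riem.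
  rewrite (sumn_ext _ (fun k => G a k d * G b c k) (fun k => G c b k * G a k d))
    by (intros; rewrite (G_sym c b) by auto; ring).
  rewrite (sumn_ext _ (fun k => G b k d * G c a k) (fun k => G a c k * G b k d))
    by (intros; rewrite (G_sym a c) by auto; ring).
  rewrite (sumn_ext _ (fun k => G c k d * G a b k) (fun k => G b a k * G c k d))
    by (intros; rewrite (G_sym b a) by auto; ring).
  rewrite (dG_sym a c b), (dG_sym b c a), (dG_sym c b a) by auto; ring.
Qed.

Lemma riem_bianchi2 a b c d e :
  (a < n)%nat -> (b < n)%nat -> (c < n)%nat -> (d < n)%nat -> (e < n)%nat ->
  jcov13 riem riem_d a b c d e + jcov13 riem riem_d b c a d e
  + jcov13 riem riem_d c a b d e = 0.
Proof.
  intros Ha Hb Hc Hd He.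
  pose (lin a b c k :=
    - (dG a b d k * G c k e + G b d k * dG a c k e) + (dG a b k e * G c d k + G b k e * dG a c d k)
    - G a d k * (dG b c k e - dG c b k e) + G a k e * (dG b c d k - dG c b d k)).
  pose (quad a b c k l :=
    G a d k * (G b k l * G c l e) - G a d k * (G b l e * G c k l)
    - G a k e * (G b d l * G c l k) + G a k e * (G b l k * G c d l)).
  assert (expand : forall a b c,
    jcov13 riem riem_d a b c d e
    = ddG a b c d e - ddG a c b d e - sumn n (fun k => G a b k * riem k c d e)
      - sumn n (fun k => G a c k * riem b k d e)
      + sumn n (fun k => lin a b c k + sumn n (quad a b c k))).
  { intros a' b' c'.
    rewrite (sumn_ext _ (fun k => lin a' b' c' k + sumn n (quad a' b' c' k))
      (fun k => - (dG a' b' d k * G c' k e + G b' d k * dG a' c' k e)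
                + (dG a' b' k e * G c' d k + G b' k e * dG a' c' d k)
                - G a' d k * riem b' c' k e + G a' k e * riem b' c' d k)).
    - unfold jcov13, riem_d.
      repeat (rewrite sumn_plus || rewrite sumn_minus || rewrite sumn_opp); ring.
    - intros k Hk; unfold lin, quad, riem.
      rewrite sumn_plus, !sumn_minus, !sumn_scal_l; ring. }
  assert (pair : forall a b c, (a < n)%nat -> (b < n)%nat ->
    sumn n (fun k => G a b k * riem k c d e) + sumn n (fun k => G b a k * riem c k d e) = 0).
  { intros a' b' c' Ha' Hb'; rewrite <- sumn_plus; apply sumn_zero; intros k Hk.
    rewrite (G_sym b' a'), (riem_antisym c' k) by auto; ring. }
  rewrite !expand.
  pose proof (pair a b c Ha Hb); pose proof (pair b c a Hb Hc); pose proof (pair c a b Hc Ha).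
  rewrite (ddG_comm b a), (ddG_comm c b), (ddG_comm a c) by auto.
  assert (cyclic : sumn n (fun k => lin a b c k + sumn n (quad a b c k))
    + sumn n (fun k => lin b c a k + sumn n (quad b c a k))
    + sumn n (fun k => lin c a b k + sumn n (quad c a b k)) = 0).
  { rewrite <- !sumn_plus.
    rewrite (sumn_ext _ _ (fun k => (lin a b c k + lin b c a k + lin c a b k)
      + sumn n (fun l => quad a b c k l + quad b c a k l + quad c a b k l)))
      by (intros; rewrite !sumn_plus; ring).
    rewrite sumn_plus, sumn_zero, sumn_antisym_zero; [ring | |].
    - intros k l _ _; unfold quad; ring.
    - intros k _; unfold lin; ring. }
  lra.
Qed.

Lemma riem_contracted_bianchi b c e : (b < n)%nat -> (c < n)%nat -> (e < n)%nat ->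
  sumn n (fun m => jcov13 riem riem_d m b c e m)
  = - jcov02 ric ric_d b c e + jcov02 ric ric_d c b e.
Proof.
  intros Hb Hc He.
  rewrite (sumn_ext _ _ (fun m => - jcov13 riem riem_d b c m e m + jcov13 riem riem_d c b m e m)).
  - rewrite sumn_plus, sumn_opp, !jcov13_trace; reflexivity.
  - intros m Hm; pose proof (riem_bianchi2 m b c e m Hm Hb Hc He Hm) as H.
    rewrite (jcov13_riem_antisym c b m) in H; lra.
Qed.

Section RicciIdentity.
(* [T], [dT] and [ddT] are the values at the point of a (0,2)-tensor field and of
   its partial derivatives: [dT a c e = ∂_a T_{ce}], [ddT a b c e = ∂_a ∂_b T_{ce}]. *)
Variables (T : nat -> nat -> R) (dT : nat -> nat -> nat -> R)
          (ddT : nat -> nat -> nat -> nat -> R).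

Definition jcov02_d a b c e :=
  ddT a b c e - sumn n (fun k => dG a b c k * T k e + G b c k * dT a k e)
  - sumn n (fun k => dG a b e k * T c k + G b e k * dT a c k).

Definition codazzi_defect b c e := jcov02 T dT b c e - jcov02 T dT c b e.
Definition codazzi_defect_d a b c e := jcov02_d a b c e - jcov02_d a c b e.

Definition ric_riem_cycle a b c e :=
  sumn n (fun m => T a m * riem b c e m + T b m * riem c a e m + T c m * riem a b e m).

Lemma ric_riem_second_identity a b c e :
  (a < n)%nat -> (b < n)%nat -> (c < n)%nat -> (e < n)%nat ->
  sumn n (fun m => T a m * riem b e c m - T b m * riem a c e m
                   + T c m * riem e b a m - T e m * riem c a b m)
  = ric_riem_cycle a b c e - ric_riem_cycle e c a b.
Proof.
  intros Ha Hb Hc He; unfold ric_riem_cycle; rewrite <- sumn_minus.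
  apply sumn_ext; intros m Hm.
  pose proof (riem_bianchi1 b e c m Hb He Hc) as B1.
  pose proof (riem_bianchi1 e b a m He Hb Ha) as B2.
  rewrite (riem_antisym c b e m) in B1; rewrite (riem_antisym b a e m) in B2.
  replace (riem b e c m) with (riem b c e m - riem e c b m) by lra.
  replace (riem e b a m) with (riem a b e m - riem a e b m) by lra.
  rewrite (riem_antisym c a e m); ring.
Qed.

Hypothesis ddT_comm : forall a b c e,
  (a < n)%nat -> (b < n)%nat -> (c < n)%nat -> (e < n)%nat -> ddT a b c e = ddT b a c e.

Lemma ricci_identity a b c e : (a < n)%nat -> (b < n)%nat -> (c < n)%nat -> (e < n)%nat ->
  jcov03 (jcov02 T dT) jcov02_d a b c e - jcov03 (jcov02 T dT) jcov02_d b a c e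
  = - (sumn n (fun m => riem a b c m * T m e) + sumn n (fun m => riem a b e m * T c m)).
Proof.
  intros Ha Hb Hc He.
  pose (lin a b k :=
    - (dG a b c k * T k e + G b c k * dT a k e) - (dG a b e k * T c k + G b e k * dT a c k)
    - G a c k * dT b k e - G a e k * dT b c k).
  pose (quad a b k l :=
    G a c k * (G b k l * T l e) + G a c k * (G b e l * T k l)
    + G a e k * (G b c l * T l k) + G a e k * (G b k l * T c l)).
  pose (rlin m := (dG a b c m - dG b a c m) * T m e + (dG a b e m - dG b a e m) * T c m).
  pose (rquad m l :=
    - (G a c l * G b l m * T m e) + G a l m * G b c l * T m e
    - G a e l * G b l m * T c m + G a l m * G b e l * T c m).
  assert (expand : forall a b,
    jcov03 (jcov02 T dT) jcov02_d a b c e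
    = ddT a b c e - sumn n (fun k => G a b k * jcov02 T dT k c e)
      + sumn n (fun k => lin a b k + sumn n (quad a b k))).
  { intros a' b'.
    rewrite (sumn_ext _ (fun k => lin a' b' k + sumn n (quad a' b' k))
      (fun k => - (dG a' b' c k * T k e + G b' c k * dT a' k e)
                - (dG a' b' e k * T c k + G b' e k * dT a' c k)
                - G a' c k * jcov02 T dT b' k e - G a' e k * jcov02 T dT b' c k)).
    - unfold jcov03, jcov02_d.
      repeat (rewrite sumn_plus || rewrite sumn_minus || rewrite sumn_opp); ring.
    - intros k Hk; unfold lin, quad, jcov02.
      rewrite !sumn_plus, !sumn_scal_l; ring. }
  assert (curvature : sumn n (fun m => riem a b c m * T m e) + sumn n (fun m => riem a b e m * T c m)
                      = sumn n (fun m => rlin m + sumn n (rquad m))).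
  { rewrite <- sumn_plus; apply sumn_ext; intros m Hm; unfold riem, rlin, rquad.
    repeat (rewrite sumn_plus || rewrite sumn_minus || rewrite sumn_opp).
    rewrite !sumn_scal_r; ring. }
  rewrite !expand, curvature, (ddT_comm b a) by auto.
  rewrite (sumn_ext _ (fun k => G b a k * jcov02 T dT k c e) (fun k => G a b k * jcov02 T dT k c e))
    by (intros; rewrite G_sym by auto; reflexivity).
  enough (sumn n (fun k => lin a b k + sumn n (quad a b k))
          - sumn n (fun k => lin b a k + sumn n (quad b a k))
          + sumn n (fun m => rlin m + sumn n (rquad m)) = 0) by lra.
  rewrite !sumn_plus.
  assert (first_order : sumn n (lin a b) - sumn n (lin b a) + sumn n rlin = 0).
  { rewrite <- sumn_minus, <- sumn_plus; apply sumn_zero; intros.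
    unfold lin, rlin; ring. }
  assert (second_order : sumn n (fun k => sumn n (quad a b k))
    - sumn n (fun k => sumn n (quad b a k)) + sumn n (fun m => sumn n (rquad m)) = 0).
  { change (sumn n (fun m => sumn n (rquad m)))
      with (sumn n (fun m => sumn n (fun l => rquad m l))).
    rewrite (sumn_swap n n rquad), <- sumn_minus, <- sumn_plus.
    rewrite (sumn_ext _ _ (fun k => sumn n (fun l => quad a b k l - quad b a k l + rquad l k)))
      by (intros; rewrite sumn_plus, sumn_minus; reflexivity).
    apply sumn_antisym_zero; intros k l _ _; unfold quad, rquad; ring. }
  lra.
Qed.

Lemma jcov03_codazzi_defect a b c e :
  jcov03 codazzi_defect codazzi_defect_d a b c e
  = jcov03 (jcov02 T dT) jcov02_d a b c e - jcov03 (jcov02 T dT) jcov02_d a c b e.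
Proof.
  unfold jcov03, codazzi_defect, codazzi_defect_d.
  rewrite (sumn_ext n (fun k => G a b k * (jcov02 T dT k c e - jcov02 T dT c k e))
             (fun k => G a b k * jcov02 T dT k c e - G a b k * jcov02 T dT c k e)),
    (sumn_ext n (fun k => G a c k * (jcov02 T dT b k e - jcov02 T dT k b e))
       (fun k => G a c k * jcov02 T dT b k e - G a c k * jcov02 T dT k b e)),
    (sumn_ext n (fun k => G a e k * (jcov02 T dT b c k - jcov02 T dT c b k))
       (fun k => G a e k * jcov02 T dT b c k - G a e k * jcov02 T dT c b k)) by (intros; ring).
  rewrite !sumn_minus; ring.
Qed.

Lemma cyclic_cov_codazzi_defect a b c e :
  (a < n)%nat -> (b < n)%nat -> (c < n)%nat -> (e < n)%nat ->
  jcov03 codazzi_defect codazzi_defect_d a b c e + jcov03 codazzi_defect codazzi_defect_d b c a e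
  + jcov03 codazzi_defect codazzi_defect_d c a b e = - ric_riem_cycle a b c e.
Proof.
  intros Ha Hb Hc He; rewrite !jcov03_codazzi_defect.
  pose proof (ricci_identity a b c e Ha Hb Hc He).
  pose proof (ricci_identity b c a e Hb Hc Ha He).
  pose proof (ricci_identity c a b e Hc Ha Hb He).
  assert (bianchi : sumn n (fun m => riem a b c m * T m e) + sumn n (fun m => riem b c a m * T m e)
                    + sumn n (fun m => riem c a b m * T m e) = 0).
  { rewrite <- !sumn_plus; apply sumn_zero; intros m Hm.
    rewrite <- !Rmult_plus_distr_r, riem_bianchi1 by auto; ring. }
  assert (cycle : sumn n (fun m => riem a b e m * T c m) + sumn n (fun m => riem b c e m * T a m)
                  + sumn n (fun m => riem c a e m * T b m) = ric_riem_cycle a b c e).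
  { unfold ric_riem_cycle; rewrite <- !sumn_plus; apply sumn_ext; intros; ring. }
  lra.
Qed.

End RicciIdentity.

Section GradientWedge.
(* [w b = ∂_b f] and [dw a b = ∂_a ∂_b f] for a function f. *)
Variables (k : R) (w : nat -> R) (dw : nat -> nat -> R)
          (u : nat -> nat -> R) (du : nat -> nat -> nat -> R).

Definition jhess a b := dw a b - sumn n (fun l => G a b l * w l).

Definition grad_wedge b c e := k * (u c e * w b - u b e * w c).
Definition grad_wedge_d a b c e :=
  k * (du a c e * w b + u c e * dw a b - (du a b e * w c + u b e * dw a c)).

Lemma jcov03_grad_wedge a b c e :
  jcov03 grad_wedge grad_wedge_d a b c e
  = k * (u c e * jhess a b - u b e * jhess a c)
    + k * (w b * jcov02 u du a c e - w c * jcov02 u du a b e).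
Proof.
  unfold jcov03, jcov02, jhess, grad_wedge, grad_wedge_d.
  rewrite (sumn_ext n (fun l => G a b l * (k * (u c e * w l - u l e * w c)))
             (fun l => k * (u c e * (G a b l * w l)) - k * (w c * (G a b l * u l e)))),
    (sumn_ext n (fun l => G a c l * (k * (u l e * w b - u b e * w l)))
       (fun l => k * (w b * (G a c l * u l e)) - k * (u b e * (G a c l * w l)))),
    (sumn_ext n (fun l => G a e l * (k * (u c l * w b - u b l * w c)))
       (fun l => k * (w b * (G a e l * u c l)) - k * (w c * (G a e l * u b l)))) by (intros; ring).
  rewrite !sumn_minus, !sumn_scal_l; ring.
Qed.

Hypothesis jhess_sym : forall a b, (a < n)%nat -> (b < n)%nat -> jhess a b = jhess b a.
Hypothesis u_codazzi : forall a b e, (a < n)%nat -> (b < n)%nat -> (e < n)%nat ->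
  jcov02 u du a b e = jcov02 u du b a e.

Lemma cyclic_cov_grad_wedge a b c e :
  (a < n)%nat -> (b < n)%nat -> (c < n)%nat -> (e < n)%nat ->
  jcov03 grad_wedge grad_wedge_d a b c e + jcov03 grad_wedge grad_wedge_d b c a e
  + jcov03 grad_wedge grad_wedge_d c a b e = 0.
Proof.
  intros; rewrite !jcov03_grad_wedge.
  rewrite (jhess_sym b a), (jhess_sym c b), (jhess_sym a c),
    (u_codazzi b a), (u_codazzi c b), (u_codazzi a c) by auto.
  ring.
Qed.

End GradientWedge.
End ConnectionJet.

(** * The jets of the Levi-Civita connection *)

Section RiemannianJets.
Variables (n : nat) (g gi : tensor02).
Hypothesis Hr : riemannian n g gi.

Lemma g_smooth i j : (i < n)%nat -> (j < n)%nat -> smooth n (g i j).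
Proof. destruct Hr as [H _]; auto. Qed.

Lemma gi_smooth i j : (i < n)%nat -> (j < n)%nat -> smooth n (gi i j).
Proof. destruct Hr as [_ [H _]]; auto. Qed.

Lemma g_sym i j : (i < n)%nat -> (j < n)%nat -> g i j = g j i.
Proof.
  destruct Hr as [_ [_ [H _]]]; intros; apply functional_extensionality; auto.
Qed.

Ltac smooth_tac := repeat first
  [ assumption | lia | apply g_smooth | apply gi_smooth | apply smooth_pd
  | apply smooth_const | apply smooth_sumn; intros ? ?
  | apply smooth_minus | apply smooth_plus | apply smooth_mult | apply smooth_scal ].

Lemma Gamma_smooth b c d : (b < n)%nat -> (c < n)%nat -> (d < n)%nat ->
  smooth n (Gamma n g gi b c d).
Proof. intros; unfold Gamma; smooth_tac. Qed.

Lemma Gamma_sym b c d : (b < n)%nat -> (c < n)%nat -> Gamma n g gi b c d = Gamma n g gi c b d.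
Proof.
  intros; apply functional_extensionality; intros x; unfold Gamma; f_equal.
  apply sumn_ext; intros k Hk; rewrite (g_sym b c) by auto; ring.
Qed.

Lemma Ric_smooth a c : (a < n)%nat -> (c < n)%nat -> smooth n (Ric n g gi a c).
Proof.
  intros; unfold Ric, Riem; smooth_tac; apply Gamma_smooth; auto.
Qed.

Lemma Scal_smooth : smooth n (Scal n g gi).
Proof.
  unfold Scal; smooth_tac; apply Ric_smooth; auto.
Qed.

Lemma Gamma_lower a b c x : (a < n)%nat -> (b < n)%nat -> (c < n)%nat ->
  sumn n (fun k => Gamma n g gi a b k x * g k c x)
  = / 2 * (pd (g c b) a x + pd (g c a) b x - pd (g a b) c x).
Proof.
  intros Ha Hb Hc; destruct Hr as [_ [_ [Hs [_ Hinv]]]].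
  set (F l := pd (g l b) a x + pd (g l a) b x - pd (g a b) l x).
  unfold Gamma.
  rewrite (sumn_ext _ _ (fun k => / 2 * sumn n (fun l => F l * (g c k x * gi k l x)))).
  - rewrite sumn_scal_l, sumn_swap.
    rewrite (sumn_ext _ _ (fun l => F l * (if Nat.eqb c l then 1 else 0)))
      by (intros l Hl; rewrite sumn_scal_l, Hinv by auto; reflexivity).
    rewrite sumn_kronecker by auto; reflexivity.
  - intros k Hk; rewrite Rmult_assoc, <- sumn_scal_r; f_equal.
    apply sumn_ext; intros l Hl; rewrite (Hs k c x) by auto; unfold F; ring.
Qed.

Lemma cov02_metric a b c x : (a < n)%nat -> (b < n)%nat -> (c < n)%nat ->
  cov02 n g gi g a b c x = 0.
Proof.
  intros Ha Hb Hc; unfold cov02.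
  rewrite (sumn_ext _ (fun k => Gamma n g gi a c k x * g b k x)
             (fun k => Gamma n g gi a c k x * g k b x)) by (intros; rewrite (g_sym b) by auto; auto).
  rewrite !Gamma_lower by auto.
  rewrite (g_sym c b), (g_sym b a), (g_sym c a) by auto; field.
Qed.

Lemma metric_sym_codazzi : sym_codazzi n g gi g.
Proof.
  split; [exact g_smooth | split].
  - intros; rewrite g_sym; auto.
  - intros; rewrite !cov02_metric; auto.
Qed.

Definition Gamma_at x b c d := Gamma n g gi b c d x.
Definition dGamma_at x z b c d := pd (Gamma n g gi b c d) z x.
Definition ddGamma_at x y z b c d := pd (pd (Gamma n g gi b c d) z) y x.

Lemma Gamma_at_sym x a b k : (a < n)%nat -> (b < n)%nat -> Gamma_at x a b k = Gamma_at x b a k.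
Proof. intros; unfold Gamma_at; rewrite Gamma_sym; auto. Qed.

Lemma dGamma_at_sym x z b c d : (b < n)%nat -> (c < n)%nat ->
  dGamma_at x z b c d = dGamma_at x z c b d.
Proof. intros; unfold dGamma_at; rewrite Gamma_sym; auto. Qed.

Lemma ddGamma_at_comm x y z b c d :
  (y < n)%nat -> (z < n)%nat -> (b < n)%nat -> (c < n)%nat -> (d < n)%nat ->
  ddGamma_at x y z b c d = ddGamma_at x z y b c d.
Proof. intros; apply (pd_comm n); auto; apply Gamma_smooth; auto. Qed.

Ltac has_pd_tac := repeat first
  [ apply has_pd_minus | apply has_pd_plus | apply has_pd_mult
  | apply has_pd_sumn; intros ? ? | apply (smooth_has_pd n) ].

Lemma has_pd_Riem z a b c d x :
  (z < n)%nat -> (a < n)%nat -> (b < n)%nat -> (c < n)%nat -> (d < n)%nat ->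
  has_pd (Riem n g gi a b c d) z x
    (riem_d n (Gamma_at x) (dGamma_at x) (ddGamma_at x) z a b c d).
Proof.
  intros; unfold Riem, riem_d, Gamma_at, dGamma_at, ddGamma_at.
  has_pd_tac; smooth_tac; apply Gamma_smooth; auto.
Qed.

Lemma has_pd_Ric a c e x : (a < n)%nat -> (c < n)%nat -> (e < n)%nat ->
  has_pd (Ric n g gi c e) a x (ric_d n (Gamma_at x) (dGamma_at x) (ddGamma_at x) a c e).
Proof. intros; apply has_pd_sumn; intros; apply has_pd_Riem; auto. Qed.

Lemma has_pd_cov02 (T : tensor02) a b c e x :
  (forall i j, (i < n)%nat -> (j < n)%nat -> smooth n (T i j)) ->
  (a < n)%nat -> (b < n)%nat -> (c < n)%nat -> (e < n)%nat ->
  has_pd (cov02 n g gi T b c e) a x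
    (jcov02_d n (Gamma_at x) (dGamma_at x) (fun c e => T c e x)
       (fun a c e => pd (T c e) a x) (fun a b c e => pd (pd (T c e) b) a x) a b c e).
Proof.
  intros HT; intros; unfold cov02, jcov02_d, Gamma_at, dGamma_at.
  has_pd_tac; repeat first [assumption | lia | apply HT | apply Gamma_smooth | apply smooth_pd].
Qed.

Lemma contracted_bianchi p q r y : (p < n)%nat -> (q < n)%nat -> (r < n)%nat ->
  cov02 n g gi (Ric n g gi) p q r y - cov02 n g gi (Ric n g gi) q p r y
  = - div13 n g gi (Riem n g gi) p q r y.
Proof.
  intros Hp Hq Hr'.
  set (G := Gamma_at y); set (dG := dGamma_at y); set (ddG := ddGamma_at y).
  assert (cov13_Riem : forall m, (m < n)%nat ->
    cov13 n g gi (Riem n g gi) m p q r m y = jcov13 n G (riem n G dG) (riem_d n G dG ddG) m p q r m).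
  { intros m Hm; unfold cov13; rewrite (pd_unique _ _ _ _ (has_pd_Riem m p q r m y Hm Hp Hq Hr' Hm)).
    reflexivity. }
  assert (cov02_Ric : forall b c e, (b < n)%nat -> (c < n)%nat -> (e < n)%nat ->
    cov02 n g gi (Ric n g gi) b c e y = jcov02 n G (ric n G dG) (ric_d n G dG ddG) b c e).
  { intros b c e Hb Hc He; unfold cov02; rewrite (pd_unique _ _ _ _ (has_pd_Ric b c e y Hb Hc He)).
    reflexivity. }
  unfold div13; rewrite (sumn_ext _ _ _ cov13_Riem).
  pose proof (Gamma_at_sym y) as G_sym; pose proof (ddGamma_at_comm y) as ddG_comm.
  rewrite riem_contracted_bianchi, !cov02_Ric by auto.
  ring.
Qed.

Lemma jhess_at_sym f x a b : smooth n f -> (a < n)%nat -> (b < n)%nat ->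
  jhess n (Gamma_at x) (fun b => pd f b x) (fun a b => pd (pd f b) a x) a b
  = jhess n (Gamma_at x) (fun b => pd f b x) (fun a b => pd (pd f b) a x) b a.
Proof.
  intros Hf Ha Hb; unfold jhess; rewrite (pd_comm n f b a x) by auto.
  f_equal; apply sumn_ext; intros; rewrite Gamma_at_sym by auto; reflexivity.
Qed.

End RiemannianJets.

Section Main.
Variables (n : nat) (g gi : tensor02).
Hypothesis Hr : riemannian n g gi.

(* Both hypotheses of the theorem give ∇_p R_{qr} - ∇_q R_{pr} this shape. *)
Definition ric_defect_is_grad_wedge (k : R) (f : Pt -> R) (u : tensor02) : Prop :=
  forall p q r y, (p < n)%nat -> (q < n)%nat -> (r < n)%nat ->
    cov02 n g gi (Ric n g gi) p q r y - cov02 n g gi (Ric n g gi) q p r y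
    = k * (u q r y * pd f p y - u p r y * pd f q y).

Lemma condition_ii_grad_wedge : condition_ii n g gi ->
  exists k f u, smooth n f /\ sym_codazzi n g gi u /\ ric_defect_is_grad_wedge k f u.
Proof.
  intros (K & A & B & phi & t & HA & _ & Hphi & Ht & _ & Hdiv & Hdiv0).
  exists (- (B / A)), phi, t; split; [exact Hphi | split; [exact Ht |]].
  intros p q r y Hp Hq Hr'; rewrite contracted_bianchi by auto.
  assert (A * div13 n g gi (Riem n g gi) p q r y
          + B * (t p r y * pd phi q y - t q r y * pd phi p y) = 0)
    by (rewrite <- Hdiv by auto; apply Hdiv0; auto).
  apply (Rmult_eq_reg_l A); [| exact HA].
  replace (A * (- (B / A) * (t q r y * pd phi p y - t p r y * pd phi q y)))
    with (- B * (t q r y * pd phi p y - t p r y * pd phi q y)) by (field; exact HA).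
  lra.
Qed.

Lemma grad_wedge_ric_riem_cycle k f u x a b c e :
  smooth n f -> sym_codazzi n g gi u -> ric_defect_is_grad_wedge k f u ->
  (a < n)%nat -> (b < n)%nat -> (c < n)%nat -> (e < n)%nat ->
  ric_riem_cycle n (Gamma_at n g gi x) (dGamma_at n g gi x) (fun a m => Ric n g gi a m x) a b c e = 0.
Proof.
  intros Hf [Hu [_ Hcod]] HD Ha Hb Hc He.
  set (G := Gamma_at n g gi x); set (dG := dGamma_at n g gi x).
  set (T := fun c e => Ric n g gi c e x); set (dT := fun a c e => pd (Ric n g gi c e) a x).
  set (ddT := fun a b c e => pd (pd (Ric n g gi c e) b) a x).
  set (w := fun b => pd f b x); set (dw := fun a b => pd (pd f b) a x).
  set (U := fun c e => u c e x); set (dU := fun a c e => pd (u c e) a x).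
  pose proof (Gamma_at_sym n g gi Hr x) as G_sym.
  pose proof (dGamma_at_sym n g gi Hr x) as dG_sym.
  assert (same_jet : forall a b c e,
    (a < n)%nat -> (b < n)%nat -> (c < n)%nat -> (e < n)%nat ->
    jcov03 n G (codazzi_defect n G T dT) (codazzi_defect_d n G dG T dT ddT) a b c e
    = jcov03 n G (grad_wedge k w U) (grad_wedge_d k w dw U dU) a b c e).
  { intros a' b' c' e' Ha' Hb' Hc' He'; apply jcov03_ext; auto.
    - intros p q r Hp Hq Hr'; exact (HD p q r x Hp Hq Hr').
    - pose proof (has_pd_minus _ _ _ _ _ _
        (has_pd_cov02 n g gi Hr (Ric n g gi) a' b' c' e' x (Ric_smooth n g gi Hr) Ha' Hb' Hc' He')
        (has_pd_cov02 n g gi Hr (Ric n g gi) a' c' b' e' x (Ric_smooth n g gi Hr) Ha' Hc' Hb' He'))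
        as Hdefect.
      replace (fun y => cov02 n g gi (Ric n g gi) b' c' e' y - cov02 n g gi (Ric n g gi) c' b' e' y)
        with (fun y => k * (u c' e' y * pd f b' y - u b' e' y * pd f c' y)) in Hdefect
        by (apply functional_extensionality; intros y; symmetry; apply HD; auto).
      eapply uniqueness_limite; [exact Hdefect |].
      apply has_pd_scal, has_pd_minus; apply has_pd_mult; apply (smooth_has_pd n);
        auto; apply smooth_pd; auto. }
  assert (ddT_comm : forall a b c e, (a < n)%nat -> (b < n)%nat -> (c < n)%nat -> (e < n)%nat ->
                       ddT a b c e = ddT b a c e)
    by (intros; apply (pd_comm n); auto; apply Ric_smooth; auto).
  assert (hess_sym : forall a b, (a < n)%nat -> (b < n)%nat -> jhess n G w dw a b = jhess n G w dw b a)
    by (intros; apply jhess_at_sym; auto).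
  assert (U_codazzi : forall a b e, (a < n)%nat -> (b < n)%nat -> (e < n)%nat ->
                        jcov02 n G U dU a b e = jcov02 n G U dU b a e)
    by (intros a' b' e' Ha' Hb' He'; exact (Hcod a' b' e' x Ha' Hb' He')).
  pose proof (cyclic_cov_codazzi_defect n G dG G_sym dG_sym T dT ddT ddT_comm a b c e Ha Hb Hc He).
  pose proof (cyclic_cov_grad_wedge n G k w dw U dU hess_sym U_codazzi a b c e Ha Hb Hc He).
  rewrite !same_jet in * by auto.
  lra.
Qed.

End Main.

Theorem mainTheorem7 (n : nat) (g gi : tensor02) :
  (2 <= n)%nat ->
  riemannian n g gi ->
  (nearly_conf_symmetric n g gi \/ condition_ii n g gi) ->
  forall (a b c e : nat) (x : Pt),
    (a < n)%nat -> (b < n)%nat -> (c < n)%nat -> (e < n)%nat ->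
    sumn n (fun m => Ric n g gi a m x * Riem n g gi b c e m x
                   + Ric n g gi b m x * Riem n g gi c a e m x
                   + Ric n g gi c m x * Riem n g gi a b e m x) = 0 /\
    sumn n (fun m => Ric n g gi a m x * Riem n g gi b e c m x
                   - Ric n g gi b m x * Riem n g gi a c e m x
                   + Ric n g gi c m x * Riem n g gi e b a m x
                   - Ric n g gi e m x * Riem n g gi c a b m x) = 0.
Proof.
  intros _ Hr Hcase a b c e x Ha Hb Hc He.
  assert (cycle : forall a b c e,
    (a < n)%nat -> (b < n)%nat -> (c < n)%nat -> (e < n)%nat ->
    ric_riem_cycle n (Gamma_at n g gi x) (dGamma_at n g gi x)
      (fun a m => Ric n g gi a m x) a b c e = 0).
  { destruct Hcase as [Hncs | Hii].
    - intros; apply (grad_wedge_ric_riem_cycle n g gi Hr (/ (2 * (INR n - 1))) (Scal n g gi) g);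
        auto using Scal_smooth, metric_sym_codazzi.
    - destruct (condition_ii_grad_wedge n g gi Hr Hii) as (k & f & u & Hf & Hu & HD).
      intros; apply (grad_wedge_ric_riem_cycle n g gi Hr k f u); auto. }
  split; [exact (cycle a b c e Ha Hb Hc He) |].
  etransitivity.
  - exact (ric_riem_second_identity n (Gamma_at n g gi x) (dGamma_at n g gi x)
             (Gamma_at_sym n g gi Hr x) (dGamma_at_sym n g gi Hr x)
             (fun a m => Ric n g gi a m x) a b c e Ha Hb Hc He).
  - rewrite !cycle by auto; ring.
Qed.
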